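(* Let $\boldsymbol{u}^\star\in\mathbb{R}^n\setminus\{\boldsymbol{0}\}$ and $f(\boldsymbol{u})=\frac12\|\boldsymbol{u}\boldsymbol{u}^{\mathrm T}-\boldsymbol{u}^\star{\boldsymbol{u}^\star}^{\mathrm T}\|_1$ on $\mathbb{R}^n$. Let $\boldsymbol{u}\ne\boldsymbol{0}$ be a spurious stationary point of $f$. Then $$\{\boldsymbol{w}\in\mathbb{R}^n:df(\boldsymbol{u})(\boldsymbol{w})=0\}=\prod_{j=1}^n C_j,\qquad C_j=\begin{cases}\operatorname{sgn}(u_j)\cdot\mathbb{R}_-, & j\in\operatorname{supp}(\boldsymbol{u}^\star),\ |u_j|=|u_j^\star|,\\ \mathbb{R}, & j\in\operatorname{supp}(\boldsymbol{u}^\star),\ |u_j|<|u_j^\star|,\\ \{0\}, & j\notin\operatorname{supp}(\boldsymbol{u}^\star).\end{cases}$$ Moreover, $\{\boldsymbol{w}:df(\boldsymbol{0})(\boldsymbol{w})=0\}=\mathbb{R}^n$.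
   Context: $\|\cdot\|_1$ is the entrywise $\ell_1$-norm. $\operatorname{supp}(\boldsymbol{x})=\{i:x_i\ne0\}$, $\mathbb{R}_-=\{x\le0\}$. $df(\boldsymbol{x})(\boldsymbol{w})=\lim_{t\searrow0}(f(\boldsymbol{x}+t\boldsymbol{w})-f(\boldsymbol{x}))/t$. A point $\boldsymbol{u}$ is stationary if $\boldsymbol{0}\in\partial f(\boldsymbol{u})$, where $\partial f(\boldsymbol{u})=\{\boldsymbol{Z}\boldsymbol{u}:\boldsymbol{Z}\text{ symmetric}, \boldsymbol{Z}\in\operatorname{Sign}(\boldsymbol{u}\boldsymbol{u}^{\mathrm T}-\boldsymbol{u}^\star{\boldsymbol{u}^\star}^{\mathrm T})\}$ (entrywise set-valued sign, $\operatorname{Sign}(0)=[-1,1]$) is the (Fréchet = limiting = Clarke) subdifferential; it is spurious if additionally $\boldsymbol{u}\notin\{\boldsymbol{u}^\star,-\boldsymbol{u}^\star\}$. *)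

From HB Require Import structures.
From mathcomp Require Import all_boot all_order all_algebra.
From mathcomp Require Import all_classical all_reals all_analysis.
Set Implicit Arguments. Unset Strict Implicit. Unset Printing Implicit Defensive.
Import Order.TTheory GRing.Theory Num.Theory.
Import numFieldNormedType.Exports.
Local Open Scope classical_set_scope.
Local Open Scope ring_scope.

Definition l1norm {R : realType} {m n : nat} (A : 'M[R]_(m, n)) : R :=
  \sum_(i < m) \sum_(j < n) `|A i j|.

Definition fobj {R : realType} {n : nat} (ustar u : 'cV[R]_n) : R :=
  2^-1 * l1norm (u *m u^T - ustar *m ustar^T).

Definition SignSet {R : realType} (x : R) : set R :=
  [set y | (0 < x -> y = 1) /\ (x < 0 -> y = -1) /\ (x = 0 -> -1 <= y <= 1)].

Definition subdiff {R : realType} {n : nat} (ustar u : 'cV[R]_n) : set 'cV[R]_n :=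
  [set Z *m u | Z in [set Z : 'M[R]_n | Z^T = Z /\
      forall i j, SignSet ((u *m u^T - ustar *m ustar^T) i j) (Z i j)]].

Definition stationary {R : realType} {n : nat} (ustar u : 'cV[R]_n) : Prop :=
  subdiff ustar u 0.

Definition spurious_stationary {R : realType} {n : nat} (ustar u : 'cV[R]_n) : Prop :=
  stationary ustar u /\ u <> ustar /\ u <> - ustar.

Definition dirderiv_zero {R : realType} {n : nat} (F : 'cV[R]_n -> R) (u w : 'cV[R]_n) : Prop :=
  (fun t : R => (F (u + t *: w) - F u) / t) @ 0^'+ --> 0.

Definition Cj {R : realType} {n : nat} (ustar u : 'cV[R]_n) (j : 'I_n) : set R :=
  if ustar j 0 == 0 then [set 0]
  else if `|u j 0| == `|ustar j 0| then [set Num.sg (u j 0) * r | r in [set r : R | r <= 0]]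
  else [set: R].

From HB Require Import structures.
From mathcomp Require Import all_boot all_order all_algebra.
From mathcomp Require Import all_classical all_reals all_analysis.
From mathcomp Require Import ring lra.
Set Implicit Arguments. Unset Strict Implicit. Unset Printing Implicit Defensive.
Import Order.TTheory GRing.Theory Num.Theory.
Import numFieldNormedType.Exports.
Local Open Scope classical_set_scope.
Local Open Scope ring_scope.

(* The one-sided derivative of [|.|] at [r] in direction [a] is [dabs r a] (that is,
   [|a|] if [r = 0] and [sg r * a] otherwise), so [df(u)(w)] is half the sum of
   [dabs] over the entries of [u u^T - s s^T] and of [u w^T + w u^T].  A stationarity
   certificate [Z] has [Z_ij a <= dabs r_ij a] entrywise and [sum_ij Z_ij (u w^T + w u^T)_ij
   = 2 w^T Z u = 0], hence [df(u)(w) = 0] iff every entry attains this bound.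
   Flipping signs by [sg s_i] reduces to [s >= 0].  Then [|u_i| <= s_i]: if the largest
   ratio [M = |u_i| / s_i] exceeded 1, the rows where [u_i / s_i = M] and those where it
   equals [1 / M], weighted by [s] and summed, give identities whose cross terms cancel by
   symmetry of [Z] and which cannot hold together.  At a spurious point, [u] is neither
   [s] nor [-s] coordinatewise, which forces [sum_i u_i = 0] and then [Z_ij = -sg(u_i u_j)]
   whenever [u_i u_j = s_i s_j]; the tightness conditions become those defining [C_j]. *)

Lemma sumr_ltgt (R : realDomainType) (I : finType) (a b F : I -> R) :
  \sum_i F i = \sum_(i | a i < b i) F i + \sum_(i | b i < a i) F i
               + \sum_(i | a i == b i) F i.
Proof.
rewrite !(big_mkcond (fun i => _ _ _)) -!big_split /=.
by apply: eq_bigr => i _; case: ltgtP; rewrite ?addr0 ?add0r.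
Qed.

Lemma le_mul_eq (R : realDomainType) (a b c d : R) :
  0 <= a <= c -> 0 <= b <= d -> 0 < c -> 0 < d -> a * b = c * d -> a = c /\ b = d.
Proof. by move=> /andP[? ?] /andP[? ?] ? ? ?; split; nra. Qed.

Lemma norm_sg_combination (R : realDomainType) (a b r q : R) : r <= 0 -> q <= 0 ->
  `|a * (Num.sg b * q) + Num.sg a * r * b|
    = - Num.sg (a * b) * (a * (Num.sg b * q) + Num.sg a * r * b).
Proof.
move=> r_le0 q_le0; rewrite sgrM.
case: (ltrgt0P a) => [a_sgn|a_sgn|->]; case: (ltrgt0P b) => [b_sgn|b_sgn|->];
  rewrite ?sgr0 ?(gtr0_sg a_sgn) ?(ltr0_sg a_sgn) ?(gtr0_sg b_sgn) ?(ltr0_sg b_sgn);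
  by [rewrite ler0_norm; [ring|nra] | rewrite ger0_norm; [ring|nra]].
Qed.

Lemma colv_neq_entry (R : Type) (n : nat) (a b : 'cV[R]_n) :
  a <> b -> exists i, a i 0 <> b i 0.
Proof.
move=> a_neq_b; apply: contra_notP a_neq_b => all_eq.
by apply/matrixP => i k; rewrite ord1; apply: contra_notP all_eq => ?; exists i.
Qed.

Section DirectionalDerivative.
Variable R : realType.

Definition dabs (r a : R) := if r == 0 then `|a| else Num.sg r * a.

Lemma norm_tangent_error (h r : R) : r != 0 ->
  0 <= `|r + h| - `|r| - Num.sg r * h /\
  (`|r + h| - `|r| - Num.sg r * h) * `|r| <= h ^+ 2.
Proof.
case: (ltrgt0P r) => // r_sgn _;
  rewrite ?(gtr0_sg r_sgn) ?(gtr0_norm r_sgn) ?(ltr0_sg r_sgn) ?(ltr0_norm r_sgn);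
  case: (lerP 0 (r + h)) => h_sgn;
  rewrite ?(ger0_norm h_sgn) ?(ltr0_norm h_sgn); split; nra.
Qed.

(* For [r = 0] the term [/ `|r|] is the junk value [0] and the bound is [t * `|b|]. *)
Lemma dabs_quotient_bound (r a b t : R) : 0 < t -> t <= 1 ->
  `|(`|r + t * a + t ^+ 2 * b| - `|r|) / t - dabs r a|
    <= t * (`|b| + (`|a| + `|b|) ^+ 2 / `|r|).
Proof.
move=> t_gt0 t_le1; have t_neq0 : t != 0 by rewrite gt_eqF.
rewrite /dabs; have [->|r_neq0] := eqVneq r 0.
  rewrite normr0 invr0 mulr0 addr0 subr0 add0r.
  have -> : t * a + t ^+ 2 * b = t * (a + t * b) by ring.
  rewrite normrM (gtr0_norm t_gt0) mulrAC divff // mul1r.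
  apply: le_trans (ler_dist_dist _ _) _.
  by rewrite addrAC subrr add0r normrM (gtr0_norm t_gt0).
set c := a + t * b.
have -> : r + t * a + t ^+ 2 * b = r + t * c by rewrite /c; ring.
have c_le : `|c| <= `|a| + `|b|.
  apply: le_trans (ler_normD _ _) _; rewrite lerD2l normrM (gtr0_norm t_gt0).
  by rewrite -[leRHS]mul1r ler_wpM2r.
set d := `|r + t * c| - `|r| - Num.sg r * (t * c).
have [d_ge0 d_le] := norm_tangent_error (t * c) r_neq0; rewrite -/d in d_ge0 d_le.
have d_le' : d * `|r| <= t ^+ 2 * (`|a| + `|b|) ^+ 2.
  apply: le_trans d_le _; rewrite exprMn ler_wpM2l ?sqr_ge0 //.
  by rewrite -real_normK ?num_real // lerXn2r ?nnegrE ?addr_ge0.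
have -> : (`|r + t * c| - `|r|) / t - Num.sg r * a = d / t + Num.sg r * t * b.
  by rewrite /d /c; field.
have r_gt0 : 0 < `|r| by rewrite normr_gt0.
apply: le_trans (ler_normD _ _) _; rewrite mulrDr addrC; apply: lerD.
  by rewrite !normrM normr_sg r_neq0 mul1r (gtr0_norm t_gt0).
rewrite ger0_norm ?divr_ge0 ?(ltW t_gt0) // ler_pdivrMr //.
by rewrite mulrAC -expr2 mulrA ler_pdivlMr.
Qed.

Lemma cvg_at_right0_linear (g : R -> R) (l k : R) :
  (forall t, 0 < t -> t <= 1 -> `|g t - l| <= t * k) -> g x @[x --> 0^'+] --> l.
Proof.
move=> g_near; apply/cvgrPdist_lt => e e_gt0.
have k1_gt0 : 0 < `|k| + 1 by rewrite ltr_wpDl.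
near=> t.
have t_gt0 : 0 < t by near: t; exact: nbhs_right_gt.
have t_le1 : t <= 1 by near: t; exact: nbhs_right_le.
have : t < e / (`|k| + 1) by near: t; apply: nbhs_right_lt; rewrite divr_gt0.
rewrite ltr_pdivlMr // => te.
rewrite distrC; apply: le_lt_trans (g_near t t_gt0 t_le1) (le_lt_trans _ te).
apply: ler_wpM2l; first exact: ltW.
by have := ler_norm k; lra.
Unshelve. all: by end_near.
Qed.

End DirectionalDerivative.

Section Objective.
Variables (R : realType) (n : nat).
Implicit Types (s u w : 'cV[R]_n) (i j : 'I_n).

Definition resid s u i j := u i 0 * u j 0 - s i 0 * s j 0.
Definition dresid u w i j := u i 0 * w j 0 + w i 0 * u j 0.
Definition dfobj s u w := 2^-1 * \sum_i \sum_j dabs (resid s u i j) (dresid u w i j).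

Lemma residE s u i j : (u *m u^T - s *m s^T) i j = resid s u i j.
Proof. by rewrite !mxE !big_ord1 !mxE. Qed.

Lemma fobj_quotientE s u w t :
  (fobj s (u + t *: w) - fobj s u) / t =
  2^-1 * \sum_i \sum_j
    (`|resid s u i j + t * dresid u w i j + t ^+ 2 * (w i 0 * w j 0)|
       - `|resid s u i j|) / t.
Proof.
rewrite /fobj /l1norm -mulrBr -sumrB -mulrA mulr_suml; congr (_ * _).
apply: eq_bigr => i _; rewrite -sumrB mulr_suml; apply: eq_bigr => j _.
rewrite !residE; congr ((`|_| - _) / _).
by rewrite /resid /dresid !mxE; ring.
Qed.

Lemma fobj_dirderiv s u w :
  (fun t => (fobj s (u + t *: w) - fobj s u) / t) @ 0^'+ --> dfobj s u w.
Proof.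
apply: (cvg_at_right0_linear (k := 2^-1 * \sum_i \sum_j
  (`|w i 0 * w j 0| + (`|dresid u w i j| + `|w i 0 * w j 0|) ^+ 2 / `|resid s u i j|))).
move=> t t_gt0 t_le1; rewrite fobj_quotientE /dfobj -mulrBr normrM.
rewrite ger0_norm ?invr_ge0 // mulrCA ler_pM2l ?invr_gt0 // -sumrB mulr_sumr.
apply: le_trans (ler_norm_sum _ _ _) _; apply: ler_sum => i _.
rewrite -sumrB mulr_sumr; apply: le_trans (ler_norm_sum _ _ _) _; apply: ler_sum => j _.
exact: dabs_quotient_bound.
Qed.

Lemma dirderiv_zero_fobjP s u w :
  dirderiv_zero (fobj s) u w <-> dfobj s u w = 0.
Proof.
split=> [dd0|df0]; first exact: (cvg_unique _ (@fobj_dirderiv s u w) dd0).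
by have := @fobj_dirderiv s u w; rewrite df0.
Qed.

Lemma dfobj0 s w : dfobj s 0 w = 0.
Proof.
rewrite /dfobj big1 ?mulr0 // => i _; rewrite big1 // => j _.
by rewrite /dresid /dabs !mxE !(mul0r, mulr0, addr0) normr0 if_same.
Qed.

End Objective.

Section SignSet.
Variable R : realType.
Implicit Types r z : R.

Lemma SignSet_gt0 r z : SignSet r z -> 0 < r -> z = 1.
Proof. by case=> + _; apply. Qed.

Lemma SignSet_lt0 r z : SignSet r z -> r < 0 -> z = -1.
Proof. by case=> _ [+ _]; apply. Qed.

Lemma SignSet_bounds r z : SignSet r z -> -1 <= z <= 1.
Proof.
case=> z_pos [z_neg z_0]; case: (ltgtP r 0) => [/z_neg ->|/z_pos ->|/z_0 //];
  by apply/andP; split; lra.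
Qed.

Lemma SignSet_sg r z : SignSet r z -> r != 0 -> z = Num.sg r.
Proof.
move=> rz; case: (ltgtP r 0) => // r_sgn _.
  by rewrite (SignSet_lt0 rz r_sgn) ltr0_sg.
by rewrite (SignSet_gt0 rz r_sgn) gtr0_sg.
Qed.

Lemma SignSet_mulr r z : SignSet r z -> z * r = `|r|.
Proof.
have [->|r_neq0 rz] := eqVneq r 0; first by rewrite mulr0 normr0.
by rewrite (SignSet_sg rz r_neq0) -normrEsg.
Qed.

Lemma SignSet_sgM c r z : SignSet r z -> SignSet (Num.sg c * r) (Num.sg c * z).
Proof.
move=> rz; case: (ltrgt0P c) => [c_gt0|c_lt0|->].
- by rewrite gtr0_sg ?mul1r.
- rewrite ltr0_sg // !mulN1r; case: rz => z_pos [z_neg z_0]; split; [|split].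
  + by rewrite oppr_gt0 => /z_neg ->; rewrite opprK.
  + by rewrite oppr_lt0 => /z_pos ->.
  + by move/eqP; rewrite oppr_eq0 => /eqP/z_0/andP[? ?]; apply/andP; split; lra.
- rewrite sgr0 !mul0r; split; [|split]; rewrite ?ltxx //.
  by move=> _; apply/andP; split; lra.
Qed.

Lemma SignSet_le_dabs r z a : SignSet r z -> z * a <= dabs r a.
Proof.
move=> rz; rewrite /dabs; have [r0|r_neq0] := eqVneq r 0; last first.
  by rewrite (SignSet_sg rz r_neq0).
apply: le_trans (ler_norm _) _; rewrite normrM ler_piMl //.
by rewrite ler_norml; exact: SignSet_bounds rz.
Qed.

End SignSet.

Section StationaryCertificate.
Variables (R : realType) (n : nat).
Implicit Types (x p : 'I_n -> R) (Z : 'I_n -> 'I_n -> R).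

Record stationary_cert x p Z : Prop := StationaryCert {
  cert_p_ge0 : forall i, 0 <= p i;
  cert_supp : forall i, p i = 0 -> x i = 0;
  cert_sym : forall i j, Z i j = Z j i;
  cert_sign : forall i j, SignSet (x i * x j - p i * p j) (Z i j);
  cert_ker : forall i, \sum_j Z i j * x j = 0 }.

Lemma stationary_certN x p Z :
  stationary_cert x p Z -> stationary_cert (fun i => - x i) p Z.
Proof.
case=> p_ge0 supp sym sign ker; split=> //.
- by move=> i /supp ->; rewrite oppr0.
- by move=> i j; rewrite mulrNN.
- by move=> i; rewrite (eq_bigr _ (fun j _ => mulrN _ _)) sumrN ker oppr0.
Qed.

Lemma cert_p_gt0 x p Z i : stationary_cert x p Z -> p i != 0 -> 0 < p i.
Proof. by move=> cert pi_neq0; rewrite lt_def pi_neq0 (cert_p_ge0 cert). Qed.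

(* Every sign in row [k] is [-1], so that row reads [- sum x = 0]. *)
Lemma cert_sum_eq0_small x p Z (M : R) k :
  stationary_cert x p Z -> 0 < M -> (forall j, `|x j| <= M * p j) ->
  0 < p k -> M * `|x k| < p k -> \sum_j x j = 0.
Proof.
move=> cert M_gt0 x_le pk_gt0 xk_small.
suff : \sum_j Z k j * x j = \sum_j - x j.
  by rewrite (cert_ker cert k) sumrN => /esym/eqP; rewrite oppr_eq0 => /eqP.
apply: eq_bigr => j _.
have [pj0|pj_neq0] := eqVneq (p j) 0; first by rewrite (cert_supp cert pj0) oppr0 mulr0.
have pj_gt0 := cert_p_gt0 cert pj_neq0.
rewrite (SignSet_lt0 (cert_sign cert k j)) ?mulN1r // subr_lt0.
apply: le_lt_trans (ler_norm _) _; rewrite normrM.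
have := x_le j; have := normr_ge0 (x j); have := normr_ge0 (x k); nra.
Qed.

End StationaryCertificate.

Section ExtremalRatio.
Variables (R : realType) (n : nat) (x p : 'I_n -> R) (Z : 'I_n -> 'I_n -> R) (M : R).
Hypotheses (cert : stationary_cert x p Z) (M_gt1 : 1 < M)
  (x_le : forall j, `|x j| <= M * p j).

Let M_gt0 : 0 < M. Proof. exact: lt_trans ltr01 M_gt1. Qed.
Let x_le' j : x j <= M * p j. Proof. exact: le_trans (ler_norm _) (x_le j). Qed.

(* [L] (resp. [B]) collects the indices where [x j / p j] equals [M] (resp. [1 / M]). *)
Let L j := x j == M * p j.
Let B j := p j == M * x j.
Let P := \sum_(j | p j < M * x j) x j.
Let Q := \sum_(j | M * x j < p j) x j.
Let X := \sum_(j | x j < M * p j) x j.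
Let pL := \sum_(j | L j) p j.
Let pB := \sum_(j | B j) p j.
Let W := \sum_(i | L i) \sum_(j | B j) Z i j * p i * p j.

Let row_L i : 0 < p i -> L i ->
  \sum_j Z i j * x j = P - Q + (\sum_(j | B j) Z i j * p j) / M.
Proof.
move=> pi_gt0 /eqP xi; rewrite (sumr_ltgt p (fun j => M * x j)) -sumrN mulr_suml.
have sgn j : x i * x j - p i * p j = p i * (M * x j - p j) by rewrite xi; ring.
congr (_ + _ + _); apply: eq_bigr => j.
- rewrite -subr_gt0 => lt; rewrite (SignSet_gt0 (cert_sign cert i j)) ?mul1r //.
  by rewrite sgn pmulr_rgt0.
- rewrite -subr_lt0 => lt; rewrite (SignSet_lt0 (cert_sign cert i j)) ?mulN1r //.
  by rewrite sgn pmulr_rlt0.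
- by move=> /eqP ->; rewrite -mulrA [M * _]mulrC mulfK ?gt_eqF.
Qed.

Let row_B k : 0 < p k -> B k ->
  \sum_j Z k j * x j = - X + M * \sum_(j | L j) Z k j * p j.
Proof.
move=> pk_gt0 /eqP pk; have xk_gt0 : 0 < x k by rewrite -(pmulr_rgt0 _ M_gt0) -pk.
rewrite (sumr_ltgt x (fun j => M * p j)) [X in _ + X + _]big1 ?addr0; last first.
  by move=> j; rewrite ltNge x_le'.
have sgn j : x k * x j - p k * p j = x k * (x j - M * p j) by rewrite pk; ring.
rewrite -sumrN mulr_sumr; congr (_ + _).
- apply: eq_bigr => j; rewrite -subr_lt0 => lt.
  rewrite (SignSet_lt0 (cert_sign cert k j)) ?mulN1r //.
  by rewrite sgn pmulr_rlt0.
- by apply: eq_bigr => j /eqP ->; rewrite mulrCA.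
Qed.

Let sum_L : \sum_j x j = X + M * pL.
Proof.
rewrite (sumr_ltgt x (fun j => M * p j)) [X in _ + X + _]big1 ?addr0; last first.
  by move=> j; rewrite ltNge x_le'.
by rewrite mulr_sumr; congr (_ + _); apply: eq_bigr => j /eqP.
Qed.

Let sum_B : \sum_j x j = P + Q + pB / M.
Proof.
rewrite (sumr_ltgt p (fun j => M * x j)) mulr_suml; congr (_ + _).
by apply: eq_bigr => j /eqP ->; rewrite [M * _]mulrC mulfK ?gt_eqF.
Qed.

Let rows_L : pL * (P - Q) + W / M = 0.
Proof.
have <- : \sum_(i | L i) p i * \sum_j Z i j * x j = 0.
  by rewrite big1 // => i _; rewrite (cert_ker cert) mulr0.
rewrite mulr_suml /W mulr_suml -big_split; apply: eq_bigr => i Li /=.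
have [pi0|pi_neq0] := eqVneq (p i) 0.
  by rewrite pi0 !mul0r add0r big1 ?mul0r // => j _; rewrite mulr0 mul0r.
rewrite (row_L (cert_p_gt0 cert pi_neq0) Li) [RHS]mulrDr mulrA mulr_sumr.
by congr (_ + _ / _); apply: eq_bigr => j _; ring.
Qed.

Let rows_B : - pB * X + M * W = 0.
Proof.
have <- : \sum_(k | B k) p k * \sum_j Z k j * x j = 0.
  by rewrite big1 // => k _; rewrite (cert_ker cert) mulr0.
rewrite /W exchange_big /= [M * _]mulr_sumr [- pB * X]mulNr [pB * X]mulr_suml.
rewrite -sumrN -big_split.
apply: eq_bigr => k Bk /=.
have [pk0|pk_neq0] := eqVneq (p k) 0.
  by rewrite pk0 !mul0r oppr0 add0r big1 ?mulr0 // => j _; rewrite mulr0.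
rewrite (row_B (cert_p_gt0 cert pk_neq0) Bk) [RHS]mulrDr mulrN mulrCA.
congr (_ + M * _); rewrite mulr_sumr.
by apply: eq_bigr => j _; rewrite (cert_sym cert); ring.
Qed.

Let W_ge : - (pL * pB) <= W.
Proof.
rewrite /pL /pB mulr_suml -sumrN; apply: ler_sum => i _.
rewrite mulr_sumr -sumrN; apply: ler_sum => j _.
have /andP[Z_ge _] := SignSet_bounds (cert_sign cert i j).
have := mulr_ge0 (cert_p_ge0 cert i) (cert_p_ge0 cert j); nra.
Qed.

Let MpL_le_P : M * pL <= P.
Proof.
rewrite /pL /P mulr_sumr !(big_mkcond (fun j => _ _ _)) /=; apply: ler_sum => j _.
rewrite /L; case: eqP => [xj|_]; last first.
  by case: ifPn => // lt; have := cert_p_ge0 cert j; have := M_gt0; nra.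
have [pj0|pj_neq0] := eqVneq (p j) 0; first by rewrite xj pj0 mulr0 if_same.
have pj_gt0 := cert_p_gt0 cert pj_neq0.
suff -> : p j < M * x j by rewrite xj.
by rewrite xj mulrA ltr_pMl // -[1]mulr1 ltr_pM.
Qed.

Lemma extremal_ratio_absurd i0 : 0 < p i0 -> x i0 = M * p i0 -> False.
Proof.
move=> pi0_gt0 xi0.
have pL_gt0 : 0 < pL.
  apply: lt_le_trans pi0_gt0 _; rewrite /pL (bigD1 i0) /=; last exact/eqP.
  by rewrite lerDl; apply: sumr_ge0 => j _; exact: (cert_p_ge0 cert).
have pB_ge0 : 0 <= pB by rewrite sumr_ge0 // => j _; exact: (cert_p_ge0 cert).
have P_gt0 : 0 < P by apply: lt_le_trans MpL_le_P; rewrite mulr_gt0.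
have W_eq : W = - (M * (pL * (P - Q))).
  move/eqP: rows_L; rewrite addrC addr_eq0 => /eqP WM.
  by rewrite -(divfK (lt0r_neq0 M_gt0) W) WM mulNr mulrC.
have PQ_le : P - Q <= pB / M.
  rewrite ler_pdivlMr // -(ler_pM2l pL_gt0); have := W_ge; rewrite W_eq; lra.
have pBX : pB * X = - (M * M) * (pL * (P - Q)).
  by move/eqP: rows_B; rewrite W_eq mulNr addrC subr_eq0 => /eqP <-; ring.
have [[k [pk_gt0 xk_small]]|all_big] := pselect (exists k, 0 < p k /\ M * `|x k| < p k).
  have S0 := cert_sum_eq0_small cert M_gt0 x_le pk_gt0 xk_small.
  have X_eq : X = - (M * pL) by apply/eqP; rewrite -addr_eq0 -sum_L S0.
  have : (M * pL) * (pB - M * (P - Q)) = 0 by move: pBX; rewrite X_eq; lra.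
  move/eqP; rewrite mulf_eq0 (gt_eqF (mulr_gt0 M_gt0 pL_gt0)) subr_eq0 => /eqP pB_eq.
  have : pB / M = P - Q by rewrite pB_eq mulrC mulKf ?lt0r_neq0.
  by move: sum_B; rewrite S0; lra.
have Q_le0 : Q <= 0.
  apply: sumr_le0 => j lt; rewrite leNgt; apply/negP => xj_gt0; apply: all_big.
  exists j; rewrite gtr0_norm //; split=> //.
  by apply: le_lt_trans lt; rewrite pmulr_rge0 ?ltW.
have X_gt0 : 0 < X by move: sum_L sum_B MpL_le_P; lra.
have : 0 < M * M * (pL * (P - Q)) by rewrite !mulr_gt0 // subr_gt0; lra.
by have := mulr_ge0 pB_ge0 (ltW X_gt0); rewrite pBX; lra.
Qed.

End ExtremalRatio.

Section CertificateConsequences.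
Variables (R : realType) (n : nat).
Implicit Types (x p : 'I_n -> R) (Z : 'I_n -> 'I_n -> R).

Lemma cert_abs_le x p Z i : stationary_cert x p Z -> `|x i| <= p i.
Proof.
move=> cert; rewrite leNgt; apply/negP => pi_lt.
have pi_neq0 : p i != 0.
  by apply: contraTneq pi_lt => pi0; rewrite pi0 (cert_supp cert pi0) normr0 ltxx.
pose ratio j := `|x j| / p j.
have [i0 _ ratio_max] := @arg_maxP _ _ 'I_n i xpredT ratio isT.
have M_gt1 : 1 < ratio i0.
  apply: lt_le_trans (ratio_max i isT); rewrite /ratio ltr_pdivlMr ?mul1r //.
  exact: cert_p_gt0 cert pi_neq0.
have pi0_gt0 : 0 < p i0.
  rewrite lt_def (cert_p_ge0 cert) andbT; apply: contraTneq M_gt1 => pi0_eq0.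
  by rewrite /ratio pi0_eq0 invr0 mulr0 ltr10.
have x_le j : `|x j| <= ratio i0 * p j.
  have [pj0|pj_neq0] := eqVneq (p j) 0.
    by rewrite pj0 (cert_supp cert pj0) normr0 mulr0.
  by rewrite -ler_pdivrMr ?(cert_p_gt0 cert) //; exact: ratio_max.
have xi0 : `|x i0| = ratio i0 * p i0 by rewrite /ratio divfK ?lt0r_neq0.
case: (lerP 0 (x i0)) => [x_ge0|x_lt0].
  by apply: (extremal_ratio_absurd cert M_gt1 x_le pi0_gt0); rewrite -xi0 ger0_norm.
apply: (extremal_ratio_absurd (stationary_certN cert) M_gt1 _ pi0_gt0).
  by move=> j; rewrite normrN.
by rewrite -xi0 ltr0_norm.
Qed.

Lemma cert_sum_ge0 x p Z k : stationary_cert x p Z -> (forall j, `|x j| = p j) ->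
  0 < p k -> x k = p k -> 0 <= \sum_j x j.
Proof.
move=> cert x_abs pk_gt0 xk.
suff : \sum_j - x j <= \sum_j Z k j * x j by rewrite (cert_ker cert) sumrN oppr_le0.
apply: ler_sum => j _; case: (lerP 0 (x j)) => [xj_ge0|xj_lt0].
  by have /andP[Z_ge _] := SignSet_bounds (cert_sign cert k j); nra.
have xj : x j = - p j by rewrite -x_abs ltr0_norm ?opprK.
have pj_gt0 : 0 < p j by rewrite -x_abs normr_gt0 ltr0_neq0.
rewrite (SignSet_lt0 (cert_sign cert k j)) ?mulN1r // xk xj; nra.
Qed.

Lemma cert_sum_eq0 x p Z ia ib : stationary_cert x p Z ->
  x ia != p ia -> x ib != - p ib -> \sum_j x j = 0.
Proof.
move=> cert xa_neq xb_neq.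
have [[k [pk_gt0 xk_lt]]|tight] := pselect (exists k, 0 < p k /\ `|x k| < p k).
  apply: (cert_sum_eq0_small cert ltr01 _ pk_gt0); last by rewrite mul1r.
  by move=> j; rewrite mul1r (cert_abs_le _ cert).
have x_abs j : `|x j| = p j.
  apply/eqP; rewrite eq_le (cert_abs_le _ cert) leNgt /=; apply/negP => lt.
  by apply: tight; exists j; split=> //; exact: le_lt_trans (normr_ge0 _) lt.
have xb : x ib = p ib.
  by move: xb_neq; rewrite -x_abs; case: (lerP 0 (x ib)) => [/ger0_norm|/ltr0_norm] ->;
    rewrite ?opprK ?eqxx.
have xa : - x ia = p ia.
  by move: xa_neq; rewrite -x_abs; case: (lerP 0 (x ia)) => [/ger0_norm|/ltr0_norm] ->;
    rewrite ?eqxx.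
have pb_gt0 : 0 < p ib.
  rewrite -x_abs normr_gt0; apply: contraNneq xb_neq => xb0.
  by rewrite -x_abs xb0 normr0 oppr0.
have pa_gt0 : 0 < p ia.
  by rewrite -x_abs normr_gt0; apply: contraNneq xa_neq => xa0; rewrite -x_abs xa0 normr0.
apply/eqP; rewrite eq_le (cert_sum_ge0 cert x_abs pb_gt0 xb) andbT -oppr_ge0 -sumrN.
by apply: (cert_sum_ge0 (stationary_certN cert) _ pa_gt0 xa) => j; rewrite normrN.
Qed.

(* In row [i], every [l] with [x l < p l] has sign [-1]; as [sum x = 0], the row
   equation becomes [sum_(x l = p l) (Z i l + 1) p l = 0], with nonnegative terms. *)
Lemma cert_sign_eqN1 x p Z i j : stationary_cert x p Z -> \sum_l x l = 0 ->
  0 < p i -> 0 < p j -> x i * x j = p i * p j -> Z i j = -1.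
Proof.
move=> cert sum0 pi_gt0 pj_gt0 xij.
wlog xi : x cert sum0 xij / x i = p i => [wlog_pos|].
  have [xi_abs _] : `|x i| = p i /\ `|x j| = p j.
    apply: le_mul_eq; rewrite ?normr_ge0 ?(cert_abs_le _ cert) //.
    by rewrite -normrM xij ger0_norm // mulr_ge0 ?ltW.
  case: (lerP 0 (x i)) xi_abs => [/ger0_norm -> /wlog_pos|/ltr0_norm -> xi]; first exact.
  apply: (wlog_pos (fun l => - x l)) => //; first exact: stationary_certN.
    by rewrite sumrN sum0 oppr0.
  by rewrite mulrNN.
have xj : x j = p j by apply/(mulfI (lt0r_neq0 pi_gt0)); rewrite -{1}xi.
have row : \sum_(l | x l == p l) (Z i l + 1) * p l = 0.
  suff : \sum_l Z i l * x l = \sum_l - x l + \sum_(l | x l == p l) (Z i l + 1) * p l.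
    by rewrite (cert_ker cert i) sumrN sum0 oppr0 add0r.
  rewrite (big_mkcond (fun l => x l == p l)) -big_split; apply: eq_bigr => l _ /=.
  case: eqP => [->|/eqP xl_neq]; first ring.
  have xl_lt : x l < p l.
    by rewrite lt_neqAle xl_neq (le_trans (ler_norm _) (cert_abs_le _ cert)).
  rewrite addr0 (SignSet_lt0 (cert_sign cert i l)) ?mulN1r //.
  by rewrite xi -mulrBr pmulr_rlt0 // subr_lt0.
have term_ge0 l : x l == p l -> 0 <= (Z i l + 1) * p l.
  move=> _; rewrite mulr_ge0 ?(cert_p_ge0 cert) // -lerBlDr sub0r.
  by have /andP[] := SignSet_bounds (cert_sign cert i l).
have /eqP := psumr_eq0P term_ge0 row (introT eqP xj).
by rewrite mulf_eq0 (gt_eqF pj_gt0) orbF addr_eq0 => /eqP.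
Qed.

End CertificateConsequences.

Section StationaryPoint.
Variables (R : realType) (n : nat) (s u : 'cV[R]_n) (Z : 'M[R]_n).
Hypotheses (Z_sym : forall i j, Z i j = Z j i)
  (Z_sign : forall i j, SignSet (resid s u i j) (Z i j))
  (Z_ker : forall i, \sum_j Z i j * u j 0 = 0)
  (u_neq_s : u <> s) (u_neq_Ns : u <> - s).
Implicit Type w : 'cV[R]_n.

Lemma stationary_row_eq0 j c :
  (forall l, Z j l * (c * u l 0) = `|c * u l 0|) -> forall l, c * u l 0 = 0.
Proof.
move=> row_abs l; apply/eqP/normr0P.
have sum0 : \sum_k `|c * u k 0| = 0.
  rewrite -(eq_bigr _ (fun k _ => row_abs k)).
  by rewrite (eq_bigr _ (fun k _ => mulrCA _ _ _)) -mulr_sumr Z_ker mulr0.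
exact: (@psumr_eq0P _ _ xpredT _ (fun k _ => normr_ge0 _) sum0 l isT).
Qed.

Lemma stationary_supp i : s i 0 = 0 -> u i 0 = 0.
Proof.
move=> si0; apply/eqP; rewrite -[_ == 0]orbb -mulf_eq0; apply/eqP.
apply: (stationary_row_eq0 (j := i)) => l.
by have := SignSet_mulr (Z_sign i l); rewrite /resid si0 mul0r subr0.
Qed.

Lemma sg_mul_sg_u j : Num.sg (s j 0) * (Num.sg (s j 0) * u j 0) = u j 0.
Proof.
have [sj0|sj_neq0] := eqVneq (s j 0) 0; first by rewrite (stationary_supp sj0) !mulr0.
by rewrite mulrA -expr2 sqr_sg sj_neq0 mul1r.
Qed.

Lemma stationary_cert_sg : stationary_cert (fun i => Num.sg (s i 0) * u i 0)
  (fun i => `|s i 0|) (fun i j => Num.sg (s i 0) * Num.sg (s j 0) * Z i j).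
Proof.
split.
- by move=> i; exact: normr_ge0.
- by move=> i /normr0P/eqP ->; rewrite sgr0 mul0r.
- by move=> i j; rewrite Z_sym; ring.
- move=> i j; rewrite -sgrM.
  have -> : Num.sg (s i 0) * u i 0 * (Num.sg (s j 0) * u j 0) - `|s i 0| * `|s j 0|
      = Num.sg (s i 0 * s j 0) * resid s u i j by rewrite /resid !normrEsg sgrM; ring.
  exact: SignSet_sgM.
- move=> i; transitivity (Num.sg (s i 0) * \sum_j Z i j * u j 0).
    by rewrite mulr_sumr; apply: eq_bigr => j _; rewrite -{2}sg_mul_sg_u; ring.
  by rewrite Z_ker mulr0.
Qed.

Lemma stationary_abs_le i : `|u i 0| <= `|s i 0|.
Proof.
have [si0|si_neq0] := eqVneq (s i 0) 0; first by rewrite si0 (stationary_supp si0) normr0.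
by have := cert_abs_le i stationary_cert_sg; rewrite normrM normr_sg si_neq0 mul1r.
Qed.

Lemma sum_Z_dresid w : \sum_i \sum_j Z i j * dresid u w i j = 0.
Proof.
have -> : \sum_i \sum_j Z i j * dresid u w i j =
    \sum_i \sum_j w j 0 * (Z j i * u i 0) + \sum_i w i 0 * \sum_j Z i j * u j 0.
  rewrite -big_split; apply: eq_bigr => i _; rewrite mulr_sumr -big_split /=.
  by apply: eq_bigr => j _ /=; rewrite /dresid (Z_sym j i); ring.
rewrite exchange_big /= big1 ?add0r => [|j _]; last by rewrite -mulr_sumr Z_ker mulr0.
by rewrite big1 // => i _; rewrite Z_ker mulr0.
Qed.

Lemma dfobj_eq0P w : dfobj s u w = 0 <->
  forall i j, dabs (resid s u i j) (dresid u w i j) = Z i j * dresid u w i j.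
Proof.
pose gap i j := dabs (resid s u i j) (dresid u w i j) - Z i j * dresid u w i j.
have gap_ge0 i j : 0 <= gap i j by rewrite subr_ge0 SignSet_le_dabs.
have row_ge0 i : 0 <= \sum_j gap i j by exact: sumr_ge0.
have -> : dfobj s u w = 2^-1 * \sum_i \sum_j gap i j.
  rewrite /gap; under [in RHS]eq_bigr do rewrite sumrB.
  by rewrite sumrB sum_Z_dresid subr0.
split=> [|tight]; last first.
  by rewrite big1 ?mulr0 // => i _; rewrite big1 // => j _; rewrite /gap tight subrr.
move/eqP; rewrite mulf_eq0 invr_eq0 pnatr_eq0 /= => /eqP sum0 i j; apply: subr0_eq.
have row0 := @psumr_eq0P _ _ xpredT _ (fun i _ => row_ge0 i) sum0 i isT.
exact: (@psumr_eq0P _ _ xpredT _ (fun j _ => gap_ge0 i j) row0 j isT).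
Qed.

Lemma spurious_sum_eq0 : \sum_i Num.sg (s i 0) * u i 0 = 0.
Proof.
have [ia ua_neq] := colv_neq_entry u_neq_s.
have [ib ub_neq] := colv_neq_entry u_neq_Ns; rewrite mxE in ub_neq.
apply: (cert_sum_eq0 (ia := ia) (ib := ib) stationary_cert_sg); apply/eqP => sg_u.
  by apply: ua_neq; rewrite -sg_mul_sg_u sg_u -numEsg.
by apply: ub_neq; rewrite -sg_mul_sg_u sg_u mulrN -numEsg.
Qed.

Lemma spurious_sign i j : s i 0 != 0 -> s j 0 != 0 -> resid s u i j = 0 ->
  Z i j = - Num.sg (u i 0 * u j 0).
Proof.
move=> si_neq0 sj_neq0 /eqP; rewrite subr_eq0 => /eqP uij.
have sg_sq k : s k 0 != 0 -> Num.sg (s k 0) * Num.sg (s k 0) = 1.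
  by move=> sk_neq0; rewrite -expr2 sqr_sg sk_neq0.
have /= := cert_sign_eqN1 (i := i) (j := j) stationary_cert_sg spurious_sum_eq0.
rewrite !normr_gt0 si_neq0 sj_neq0 mulrACA uij -mulrACA -!normrEsg.
move=> /(_ isT isT erefl) Z_eq; apply: (mulfI (x := Num.sg (s i 0) * Num.sg (s j 0))).
  by rewrite mulf_neq0 // sgr_eq0.
by rewrite Z_eq sgrM mulrN mulrACA (sg_sq _ si_neq0) (sg_sq _ sj_neq0) mulr1.
Qed.

Lemma dfobj_eq0_Cj w : u != 0 -> dfobj s u w = 0 -> forall j, Cj s u j (w j 0).
Proof.
move=> u_neq0 /dfobj_eq0P tight j; rewrite /Cj.
have [sj0|sj_neq0] := eqVneq (s j 0) 0.
  have uj0 := stationary_supp sj0.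
  have row l : Z j l * (w j 0 * u l 0) = `|w j 0 * u l 0|.
    have := tight j l; rewrite /dabs /resid /dresid sj0 uj0 !mul0r subrr eqxx add0r.
    by move=> ->.
  apply/eqP; apply: contraNT u_neq0 => wj_neq0; apply/eqP/matrixP => l k.
  have /eqP := stationary_row_eq0 row l.
  by rewrite ord1 mxE mulf_eq0 (negbTE wj_neq0) => /eqP.
case: eqP => [uj_abs|_] //.
have uj_neq0 : u j 0 != 0 by rewrite -normr_eq0 uj_abs normr_eq0.
have rjj : resid s u j j = 0.
  apply/eqP; rewrite subr_eq0 -!expr2 -real_normK ?num_real //.
  by rewrite uj_abs real_normK ?num_real.
have := tight j j; rewrite /dabs rjj eqxx (spurious_sign sj_neq0 sj_neq0 rjj).
rewrite sgrM -expr2 sqr_sg uj_neq0 mulN1r /dresid => wj_sgn.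
have uw_le0 : u j 0 * w j 0 <= 0.
  by have := normr_ge0 (u j 0 * w j 0 + w j 0 * u j 0); rewrite wj_sgn mulrC; lra.
exists (Num.sg (u j 0) * w j 0); last by rewrite mulrA -expr2 sqr_sg uj_neq0 mul1r.
have uj_abs_gt0 : 0 < `|u j 0| by rewrite normr_gt0.
by rewrite /= -(pmulr_lle0 _ uj_abs_gt0) mulrAC -numEsg.
Qed.

Lemma Cj_dfobj_eq0 w : (forall j, Cj s u j (w j 0)) -> dfobj s u w = 0.
Proof.
move=> wC; apply/dfobj_eq0P => i j.
have [r0|r_neq0] := eqVneq (resid s u i j) 0; last first.
  by rewrite /dabs (negbTE r_neq0) (SignSet_sg (Z_sign i j) r_neq0).
rewrite /dabs r0 eqxx /dresid.
have w_supp k : s k 0 = 0 -> w k 0 = 0 by move=> sk0; have := wC k; rewrite /Cj sk0 eqxx.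
have [si0|si_neq0] := eqVneq (s i 0) 0.
  by rewrite (stationary_supp si0) (w_supp _ si0) !(mul0r, mulr0, addr0) normr0.
have [sj0|sj_neq0] := eqVneq (s j 0) 0.
  by rewrite (stationary_supp sj0) (w_supp _ sj0) !(mul0r, mulr0, addr0) normr0.
have [ui_abs uj_abs] : `|u i 0| = `|s i 0| /\ `|u j 0| = `|s j 0|.
  apply: le_mul_eq; rewrite ?normr_ge0 ?stationary_abs_le ?normr_gt0 //.
  by move/eqP: r0; rewrite subr_eq0 -!normrM => /eqP ->.
have := wC i; rewrite /Cj (negbTE si_neq0) ui_abs eqxx => -[ri ri_le0 <-].
have := wC j; rewrite /Cj (negbTE sj_neq0) uj_abs eqxx => -[rj rj_le0 <-].
by rewrite (spurious_sign si_neq0 sj_neq0 r0) norm_sg_combination.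
Qed.

End StationaryPoint.

Theorem proposition2 (R : realType) (n : nat) (ustar : 'cV[R]_n) :
  ustar != 0 ->
  (forall u : 'cV[R]_n, u != 0 -> spurious_stationary ustar u ->
     (forall j : 'I_n, ustar j 0 != 0 -> `|u j 0| <= `|ustar j 0|) /\
     [set w | dirderiv_zero (fobj ustar) u w] =
       [set w : 'cV[R]_n | forall j : 'I_n, Cj ustar u j (w j 0)]) /\
  [set w | dirderiv_zero (fobj ustar) 0 w] = [set: 'cV[R]_n].
Proof.
move=> _; split; last first.
  by apply/seteqP; split=> w // _; apply/dirderiv_zero_fobjP; exact: dfobj0.
move=> u u_neq0 [[Z [ZT_eq Z_sign_mx] Zu0] [u_neq_s u_neq_Ns]].
have Z_sym i j : Z i j = Z j i by rewrite -[in RHS]ZT_eq mxE.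
have Z_sign i j : SignSet (resid ustar u i j) (Z i j) by rewrite -residE; exact: Z_sign_mx.
have Z_ker i : \sum_j Z i j * u j 0 = 0.
  by have := congr1 (fun v : 'cV[R]_n => v i 0) Zu0; rewrite !mxE.
split=> [j _|]; first exact: (stationary_abs_le Z_sym Z_sign Z_ker).
apply/seteqP; split=> w /=.
  by move/dirderiv_zero_fobjP; exact: (dfobj_eq0_Cj Z_sym Z_sign Z_ker u_neq_s u_neq_Ns).
by move/(Cj_dfobj_eq0 Z_sym Z_sign Z_ker u_neq_s u_neq_Ns)/dirderiv_zero_fobjP.
Qed.
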